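(* Let $n\ge1$ and $u\in\mathfrak{S}_n$. The Hopf algebra morphism $\mathcal{D}\colon\mathfrak{S}Sym\to QSym$, $\mathcal{F}_u\mapsto F_{\mathrm{Des}(u)}$, satisfies $$\mathcal{D}(\mathcal{M}_u)=\begin{cases}M_{\mathrm{GDes}(u)}&\text{if }u\text{ is closed},\\ 0&\text{otherwise.}\end{cases}$$
   Context: Permutations in one-line notation. $\mathrm{Des}(u)=\{p\in[n-1]:u_p>u_{p+1}\}$, $\mathrm{GDes}(u)=\{p\in[n-1]:u_i>u_j\text{ for all }i\le p<j\}$. For $J=\{p_1<\cdots<p_k\}\subseteq[n-1]$, $\zeta_J=(n{-}p_1{+}1,\ldots,n,\ n{-}p_2{+}1,\ldots,n{-}p_1,\ldots,1,\ldots,n{-}p_k)$, $\zeta_\emptyset=1_n$. A permutation $u\in\mathfrak{S}_n$ is closed if $u=\zeta_J$ for some $J\subseteq[n-1]$ (equivalently $\mathrm{Des}(u)=\mathrm{GDes}(u)$). $\mathfrak{S}Sym$ has basis $\{\mathcal{F}_u\}$; with the weak order ($u\le v$ iff $\mathrm{Inv}(u)\subseteq\mathrm{Inv}(v)$, $\mathrm{Inv}(u)=\{(i,j):i<j,u_i>u_j\}$) and its Möbius function $\mu$, $\mathcal{M}_u=\sum_{v\ge u}\mu(u,v)\mathcal{F}_v$. $QSym$ is the algebra of quasi-symmetric functions in commuting variables $x_1,x_2,\ldots$; for $J=\{j_1<\cdots<j_{k-1}\}\subseteq[n-1]$ with associated composition $\alpha=(j_1,j_2-j_1,\ldots,n-j_{k-1})$,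 the monomial quasi-symmetric function is $M_J=M_{J,n}=\sum_{i_1<\cdots<i_k}x_{i_1}^{\alpha_1}\cdots x_{i_k}^{\alpha_k}$ and the fundamental one is $F_J=\sum_{K\supseteq J,\,K\subseteq[n-1]}M_K$. The map $\mathcal{D}$ is (known to be) a morphism of Hopf algebras. *)

From HB Require Import structures.
From mathcomp Require Import all_boot all_order all_algebra all_fingroup.
From mathcomp Require Import mpoly.

Set Implicit Arguments.
Unset Strict Implicit.
Unset Printing Implicit Defensive.

Import GRing.Theory.


(* Permutations u : 'S_n, positions 0-indexed internally; the paper's
   position p (1-indexed) is index p-1.  Subsets of [n-1] = {1,...,n-1}
   are encoded as sets J : {set 'I_n} with 0 \notin J. *)

Section Defs.
Variable n : nat.

Definition oneline (u : 'S_n) : seq nat := [seq (val (u i)).+1 | i <- enum 'I_n].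

Definition subset_n1 (J : {set 'I_n}) : bool := [forall p in J, 0 < val p].

Definition Des (u : 'S_n) : {set 'I_n} :=
  [set p : 'I_n | (0 < val p) &&
     (nth 0%N (oneline u) (val p).-1 > nth 0%N (oneline u) (val p))%N].

Definition GDes (u : 'S_n) : {set 'I_n} :=
  [set p : 'I_n | (0 < val p) &&
     [forall i : 'I_n, forall j : 'I_n,
        ((val i < val p)%N && (val p <= val j)%N) ==> (val (u j) < val (u i))%N]].

Definition zeta (J : {set 'I_n}) : seq nat :=
  let ps := sort leq [seq val p | p in J] in
  flatten (pairmap (fun a b => iota (n - b).+1 (b - a)) 0%N (ps ++ [:: n])).

Definition is_closed (u : 'S_n) : bool :=
  [exists J : {set 'I_n}, subset_n1 J && (oneline u == zeta J)].

Definition Inv (u : 'S_n) : {set 'I_n * 'I_n} :=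
  [set ij : 'I_n * 'I_n | (val ij.1 < val ij.2)%N && (val (u ij.2) < val (u ij.1))%N].

Definition weak_le (u v : 'S_n) : bool := Inv u \subset Inv v.
Definition weak_lt (u v : 'S_n) : bool := (u != v) && weak_le u v.

(* Computed with fuel; fuel #|Inv v| suffices since w < v implies
   #|Inv w| < #|Inv v|. *)
Fixpoint mu_aux (k : nat) (u v : 'S_n) : int :=
  if u == v then 1%R else
  if k is k'.+1 then (- \sum_(w : 'S_n | weak_le u w && weak_lt w v) mu_aux k' u w)%R
  else 0%R.

Definition mu (u v : 'S_n) : int :=
  if weak_le u v then mu_aux #|Inv v| u v else 0%R.

(* SSym in degree n, as formal Z-linear combinations of the F_u *)
Notation SSymn := {ffun 'S_n -> int}.

Definition calF (u : 'S_n) : SSymn := [ffun v => (v == u)%:R%R].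

Definition calM (u : 'S_n) : SSymn :=
  [ffun w => (\sum_(v : 'S_n | weak_le u v) mu u v * calF v w)%R].

(* QSym, realised as quasi-symmetric polynomials in N variables x_0..x_{N-1} *)
Variable N : nat.

Definition compo (J : {set 'I_n}) : seq nat :=
  let ps := sort leq [seq val p | p in J] in
  pairmap (fun a b => b - a)%N 0%N (ps ++ [:: n]).

Definition QM (J : {set 'I_n}) : {mpoly int[N]} :=
  \sum_(S : {set 'I_N} | #|S| == size (compo J))
    (\prod_(i in S) 'X_i ^+ nth 0%N (compo J) #|[set j in S | (val j < val i)%N]|)%R.

Definition QF (J : {set 'I_n}) : {mpoly int[N]} :=
  \sum_(K : {set 'I_n} | subset_n1 K && (J \subset K)) QM K.

(* the (degree n part of the) morphism D : F_u |-> F_{Des u}, extended linearly *)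
Definition DD (x : SSymn) : {mpoly int[N]} :=
  \sum_(v : 'S_n) (x v *: QF (Des v))%R.

End Defs.

From mathcomp Require Import all_boot all_order all_algebra all_fingroup.
From mathcomp Require Import mpoly zify.

(* D(M_u) = sum_v mu(u,v) F_{Des v} = sum_K (sum_{v : Des v ⊆ K} mu(u,v)) M_K, K ranging over
   the subsets of [n-1].  The permutations whose descent set lies in K form the weak-order
   interval below zeta_K, so the inner sum is sum_{v <= zeta_K} mu(u,v) = [u = zeta_K].
   As GDes zeta_K = K, at most one K contributes, namely K = GDes u, and it does iff u is
   closed. *)

Set Implicit Arguments.
Unset Strict Implicit.
Unset Printing Implicit Defensive.

Import GRing.Theory.

Lemma count_iota_itv a b n :
  count (fun x => a <= x < b) (iota 0 n) = minn b n - minn a n.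
Proof.
elim: n => [|n IHn]; first by rewrite !minn0.
rewrite -addn1 iotaD count_cat IHn /= addn0.
case: (leqP a n) => an; case: (ltnP n b) => nb /=; lia.
Qed.

Lemma card_ord_itv n a b : b <= n -> #|[set j : 'I_n | a <= j < b]| = b - a.
Proof.
move=> bn; transitivity (count (fun x => a <= x < b) (map val (enum 'I_n))).
  by rewrite count_map enumT cardsE cardE /enum_mem size_filter.
by rewrite val_enum_ord count_iota_itv; lia.
Qed.

Section WeakOrder.
Variable n : nat.
Implicit Types u v w : 'S_n.

Lemma val_perm_card u i : val (u i) = #|[set j | val (u j) < val (u i)]|.
Proof.
have -> : [set j | val (u j) < val (u i)] = u @^-1: [set k : 'I_n | 0 <= k < u i].
  by apply/setP => j; rewrite !inE.
rewrite card_preimset; last exact: perm_inj.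
by rewrite card_ord_itv ?subn0 // ltnW.
Qed.

Lemma Inv_inj : injective (@Inv n).
Proof.
move=> u v E; apply/permP => i; apply/val_inj.
rewrite val_perm_card [RHS]val_perm_card; apply: eq_card => j; rewrite !inE.
have ltE w : (val (w j) < val (w i)) =
    ((val j < val i) && ((j, i) \notin Inv w)) || ((i, j) \in Inv w).
  rewrite !inE /=; case: (ltngtP (val j) (val i)) => [ji|//|/val_inj->]; last by rewrite ltnn.
  have : w j != w i by rewrite (inj_eq perm_inj) -val_eqE neq_ltn ji.
  by rewrite -val_eqE /= orbF; lia.
by rewrite !ltE E.
Qed.

Lemma weak_le_refl u : weak_le u u.
Proof. exact: subxx. Qed.

Lemma weak_le_trans v u w : weak_le u v -> weak_le v w -> weak_le u w.
Proof. exact: subset_trans. Qed.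

Lemma weak_le_anti u v : weak_le u v -> weak_le v u -> u = v.
Proof. by move=> uv vu; apply: Inv_inj; apply/eqP; rewrite eqEsubset; apply/andP. Qed.

Lemma weak_lt_card w v : weak_lt w v -> #|Inv w| < #|Inv v|.
Proof.
rewrite /weak_lt /weak_le => /andP[wv le_wv].
apply: proper_card; rewrite properEneq le_wv andbT.
by apply: contra wv => /eqP/Inv_inj->.
Qed.

End WeakOrder.

Section Moebius.
Variables (n : nat) (u : 'S_n).
Implicit Types v w z : 'S_n.

Lemma mu_auxS k v : #|Inv v| <= k -> mu_aux k.+1 u v = mu_aux k u v.
Proof.
elim: k v => [|k IHk] v le_v /=; case: eqP => // _.
  by rewrite big1 ?oppr0 // => w /andP[_ /weak_lt_card]; lia.
congr (- _)%R; apply: eq_bigr => w /andP[_ /weak_lt_card lt_wv].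
by apply: IHk; lia.
Qed.

Lemma mu_aux_stable k v : #|Inv v| <= k -> mu_aux k u v = mu_aux #|Inv v| u v.
Proof.
elim: k => [|k IHk]; first by rewrite leqn0 => /eqP->.
by rewrite leq_eqVlt ltnS => /predU1P[-> // | le_v]; rewrite mu_auxS ?IHk.
Qed.

Lemma mu_out v : ~~ weak_le u v -> mu u v = 0%R.
Proof. by rewrite /mu => /negbTE->. Qed.

Lemma mu_refl : mu u u = 1%R.
Proof. by rewrite /mu weak_le_refl; case: #|_| => /=; rewrite eqxx. Qed.

Lemma mu_rec v : weak_le u v -> u != v ->
  mu u v = (- \sum_(w | weak_le u w && weak_lt w v) mu u w)%R.
Proof.
move=> uv neq_uv.
have lt_uv : #|Inv u| < #|Inv v| by apply: weak_lt_card; rewrite /weak_lt neq_uv.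
rewrite /mu uv; case def_k: #|Inv v| => [|k]; first by rewrite def_k in lt_uv.
rewrite /= (negbTE neq_uv); congr (- _)%R; apply: eq_bigr => w /andP[uw /weak_lt_card lt_wv].
by rewrite uw mu_aux_stable //; lia.
Qed.

Lemma sum_mu_weak_le z : (\sum_(v | weak_le v z) mu u v = (u == z)%:R)%R.
Proof.
rewrite (bigID (weak_le u)) /= [X in (_ + X)%R]big1 ?addr0; last first.
  by move=> v /andP[_]; exact: mu_out.
have [<-|neq_uz] := eqVneq u z.
  rewrite (big_pred1 u) ?mu_refl // => v /=.
  by apply/andP/eqP => [[vu uv]|->]; [exact: weak_le_anti | rewrite weak_le_refl].
case: (boolP (weak_le u z)) => uz; last first.
  by rewrite big1 // => v /andP[vz uv]; case/negP: uz; exact: weak_le_trans vz.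
rewrite (bigD1 z) /= ?uz ?weak_le_refl // (mu_rec uz neq_uz) addrC.
rewrite (eq_bigl (fun w => weak_le u w && weak_lt w z)); first exact: subrr.
by move=> w /=; rewrite /weak_lt; case: (weak_le w z); rewrite ?andbT ?andbF.
Qed.

End Moebius.

Section OneLine.
Variable n : nat.
Implicit Types v : 'S_n.

Lemma nth_oneline v (i : 'I_n) : nth 0 (oneline v) i = (v i).+1.
Proof. by rewrite (nth_map i) ?size_enum_ord ?ltn_ord // nth_ord_enum. Qed.

Lemma oneline_inj : injective (@oneline n).
Proof.
move=> u v E; apply/permP => i; apply: val_inj.
by have := nth_oneline u i; rewrite E nth_oneline => -[].
Qed.

Lemma mem_Des v (p : 'I_n) (lt_p : p.-1 < n) :
  (p \in Des v) = (0 < p) && (v (Ordinal lt_p) > v p).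
Proof. by rewrite inE -[p.-1]/(val (Ordinal lt_p)) !nth_oneline. Qed.

Lemma perm_le_noDes v (i j : 'I_n) : i <= j ->
  (forall p : 'I_n, i < p <= j -> p \notin Des v) -> v i <= v j.
Proof.
case: j => j lt_jn /=; elim: j lt_jn => [|j IHj] lt_jn;
  rewrite leq_eqVlt => /predU1P[eq_ij _ | lt_ij noDes];
  try by rewrite (_ : i = Ordinal lt_jn) //; apply: ord_inj.
have lt_j : j < n := ltnW lt_jn.
apply: leq_trans (IHj lt_j lt_ij _) _ => [p /andP[ip pj]|].
  by apply: noDes; rewrite ip (leq_trans pj).
move: (noDes (Ordinal lt_jn)); rewrite (@mem_Des v (Ordinal lt_jn) lt_j) /=.
by rewrite lt_ij leqnn -leqNgt; apply.
Qed.

End OneLine.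

Lemma path_ltn_le_last x s : path ltn x s -> x <= last x s.
Proof. by elim: s x => //= y s IHs x /andP[/ltnW le_xy /IHs]; apply: leq_trans. Qed.

Section Zeta.
Variables (n : nat) (K : {set 'I_n}).

Definition block (m : nat) : nat := #|[set p in K | p <= m]|.

Lemma block_split m1 m2 : m1 <= m2 ->
  block m2 = block m1 + #|[set p in K | m1 < p <= m2]|.
Proof.
move=> le_m12; rewrite /block.
rewrite -(cardsID [set p : 'I_n | p <= m1] [set p in K | p <= m2]).
congr (_ + _); apply: eq_card => p; rewrite !inE;
  case: (p \in K) => //=; case: (leqP p m1) => /=; lia.
Qed.

Lemma block_ltP m1 m2 : m1 <= m2 ->
  reflect (exists2 p, p \in K & m1 < p <= m2) (block m1 < block m2).
Proof.
move=> le_m12; rewrite (block_split le_m12) -{1}[block m1]addn0 ltn_add2l.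
apply: (iffP card_gt0P) => [[p]|[p pK p_m]]; first by rewrite !inE => /andP[]; exists p.
by exists p; rewrite !inE pK.
Qed.

Lemma block_mono m1 m2 : m1 <= m2 -> block m1 <= block m2.
Proof. by move=> /block_split->; apply: leq_addr. Qed.

Lemma block_le m : block m <= n.
Proof. by rewrite -[X in _ <= X]card_ord max_card. Qed.

(* Ranking the positions by [zkey], i.e. by decreasing block and then by increasing
   position, yields zeta_K: increasing on each block cut out by K, blocks in decreasing
   order of values. *)
Definition zkey (m : nat) : nat := (n - block m) * n + m.

Lemma zkey_lt (i j : nat) : i < n -> j < n ->
  (zkey j < zkey i) = (block i < block j) || ((block j == block i) && (j < i)).
Proof.
move=> lt_in lt_jn; rewrite /zkey; have := block_le i; have := block_le j.
case: (ltngtP (block i) (block j)) => cmp /= ? ?; nia.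
Qed.

Definition zrank (i : 'I_n) : nat := #|[set j : 'I_n | zkey j < zkey i]|.

Lemma zrank_lt i : zrank i < n.
Proof.
rewrite -[X in _ < X]card_ord -cardsT; apply: proper_card; apply/properP.
by split; [exact: subsetT | exists i; rewrite ?inE ?ltnn].
Qed.

Lemma zrank_mono (i j : 'I_n) : zkey i < zkey j -> zrank i < zrank j.
Proof.
move=> lt_ij; apply: proper_card; apply/properP; split; last by exists i; rewrite !inE ?ltnn.
by apply/subsetP => k; rewrite !inE => lt_ki; apply: ltn_trans lt_ij.
Qed.

Lemma zkey_inj (i j : 'I_n) : zkey i = zkey j -> i = j.
Proof.
move=> /(congr1 (modn^~ n)); rewrite /zkey !modnMDl !modn_small ?ltn_ord //.
exact: ord_inj.
Qed.

Lemma zrank_ltE (i j : 'I_n) : (zrank j < zrank i) = (zkey j < zkey i).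
Proof.
apply/idP/idP; last exact: zrank_mono.
case: (ltngtP (zkey j) (zkey i)) => // [/zrank_mono lt_ij | /zkey_inj->].
  by rewrite ltnNge ltnW.
by rewrite ltnn.
Qed.

Lemma zrank_inj : injective (fun i => Ordinal (zrank_lt i)).
Proof.
move=> i j /(congr1 val) /= eq_ij; apply: zkey_inj.
by case: (ltngtP (zkey i) (zkey j)) => // /zrank_mono; rewrite eq_ij ltnn.
Qed.

Definition zperm : 'S_n := perm zrank_inj.

Lemma zperm_lt (i j : 'I_n) : i < j -> (zperm j < zperm i) = (block i < block j).
Proof.
move=> lt_ij; rewrite !permE /= zrank_ltE zkey_lt ?ltn_ord //.
by rewrite (leq_gtF (ltnW lt_ij)) andbF orbF.
Qed.

Lemma mem_Inv_zperm (i j : 'I_n) :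
  ((i, j) \in Inv zperm) = (i < j) && (block i < block j).
Proof. by rewrite inE /=; case: (ltnP i j) => //= /zperm_lt. Qed.

Lemma block_stepP (p : 'I_n) : 0 < p -> block p.-1 < block p -> p \in K.
Proof.
move=> p_gt0 /(block_ltP (leq_pred _)) [q qK /andP[lt_pq le_qp]].
by rewrite (_ : p = q) //; apply: ord_inj; lia.
Qed.

Lemma Des_subset_zperm (v : 'S_n) : (Des v \subset K) = weak_le v zperm.
Proof.
apply/idP/idP => [DvK | le_vz].
  apply/subsetP => -[i j]; rewrite mem_Inv_zperm inE /= => /andP[lt_ij lt_vji].
  rewrite lt_ij /=; apply: contraT => no_cut.
  suff : v i <= v j by rewrite leqNgt lt_vji.
  apply: perm_le_noDes (ltnW lt_ij) _ => p ip_j; apply: contra no_cut => pDv.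
  by apply/(block_ltP (ltnW lt_ij)); exists p => //; apply: (subsetP DvK).
apply/subsetP => p pDv; have lt_p : p.-1 < n by apply: leq_ltn_trans (leq_pred _) _.
move: pDv; rewrite (mem_Des _ lt_p) => /andP[p_gt0 lt_vp].
have := subsetP le_vz (Ordinal lt_p, p); rewrite mem_Inv_zperm inE /= lt_vp.
by rewrite prednK // leqnn => /(_ isT) /block_stepP; apply.
Qed.

Lemma GDes_zperm : subset_n1 K -> GDes zperm = K.
Proof.
move=> /forallP K_gt0; apply/setP => p; rewrite inE /=.
apply/andP/idP => [[p_gt0 /forallP gdes]|pK].
  have lt_p : p.-1 < n by apply: leq_ltn_trans (leq_pred _) _.
  move/forallP: (gdes (Ordinal lt_p)) => /(_ p) /=.
  by rewrite ltn_predL p_gt0 leqnn zperm_lt ?ltn_predL //; apply: block_stepP.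
split; first by have := K_gt0 p; rewrite pK.
apply/forallP => i; apply/forallP => j; apply/implyP => /andP[ip pj].
rewrite zperm_lt; last exact: leq_trans pj.
by apply/(block_ltP (ltnW (leq_trans ip pj))); exists p => //; rewrite ip.
Qed.

Let cuts : seq nat := [seq val p | p in K].

Lemma zperm_block a q (x : 'I_n) :
    (0 < a -> a \in cuts) -> (q < n -> q \in cuts) ->
    (forall m, a < m < q -> m \notin cuts) -> a <= x < q -> q <= n ->
  zperm x = n - q + (x - a) :> nat.
Proof.
move=> a_cut q_cut no_cut /andP[le_ax lt_xq] le_qn.
have block_const m1 m2 : a <= m1 <= m2 -> m2 < q -> block m1 = block m2.
  move=> /andP[le_am1 le_m12] lt_m2q; apply/eqP; rewrite eqn_leq block_mono //=.
  rewrite leqNgt; apply/negP => /(block_ltP le_m12) [p pK /andP[m1p pm2]].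
  suff /no_cut/negP : a < p < q by apply; apply/imageP; exists p.
  lia.
have block_lt_cut (c : nat) m1 m2 : c \in cuts -> m1 < c <= m2 -> block m1 < block m2.
  move=> /imageP[p pK ->] /andP[m1p pm2].
  by apply/(block_ltP (ltnW (leq_trans m1p pm2))); exists p; rewrite ?m1p.
rewrite permE /= /zrank.
have -> : [set j : 'I_n | zkey j < zkey x] =
          [set j : 'I_n | a <= j < x] :|: [set j : 'I_n | q <= j < n].
  apply/setP => j; rewrite !inE zkey_lt ?ltn_ord //; have lt_jn := ltn_ord j.
  case: (ltnP j a) => [lt_ja | le_aj].
    have : block j < block x by apply: (block_lt_cut a); [apply: a_cut|]; lia.
    lia.
  case: (ltnP j x) => [lt_jx | le_xj].
    have := block_const j x; lia.
  case: (ltnP j q) => [lt_jq | le_qj].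
    have := block_const x j; lia.
  have : block x < block j by apply: (block_lt_cut q); [apply: q_cut|]; lia.
  lia.
have := cardsUI [set j : 'I_n | a <= j < x] [set j : 'I_n | q <= j < n].
rewrite (_ : _ :&: _ = set0) ?cards0 ?addn0 => [->|]; first by rewrite !card_ord_itv //; lia.
by apply/setP => j; rewrite !inE; lia.
Qed.

Lemma zeta_blocks a s : (0 < a < n -> a \in cuts) -> path ltn a s -> last a s = n ->
    (forall m, a < m < n -> (m \in s) = (m \in cuts)) ->
  flatten (pairmap (fun a b => iota (n - b).+1 (b - a)) a s) =
  [seq nth 0 (oneline zperm) x | x <- iota a (n - a)].
Proof.
elim: s a => [|q s IHs] a a_cut /=; first by move=> _ ->; rewrite subnn.
move=> /andP[lt_aq q_s] last_s s_cuts; have le_qn := path_ltn_le_last q_s.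
rewrite last_s in le_qn.
have q_cut : q < n -> q \in cuts by move=> lt_qn; rewrite -s_cuts ?inE ?eqxx //; lia.
have no_cut m : a < m < q -> m \notin cuts.
  move=> /andP[lt_am lt_mq]; rewrite -s_cuts; last lia.
  rewrite inE (ltn_eqF lt_mq) /=; apply: contraTN lt_mq => m_s.
  by rewrite -leqNgt ltnW // (allP (order_path_min ltn_trans q_s)).
rewrite (_ : n - a = (q - a) + (n - q)); last lia.
rewrite iotaD subnKC ?(ltnW lt_aq) // map_cat IHs //; first last.
- by move=> m /andP[lt_qm lt_mn]; rewrite -s_cuts ?inE ?(gtn_eqF lt_qm) //; lia.
- by move=> /andP[_ /q_cut].
congr (_ ++ _); apply: (@eq_from_nth _ 0); first by rewrite size_map !size_iota.
move=> k; rewrite size_iota => lt_k; rewrite (nth_map 0) ?size_iota // !nth_iota //.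
have lt_akn : a + k < n by lia.
rewrite -[a + k]/(val (Ordinal lt_akn)) nth_oneline (@zperm_block a q) //=; try lia.
by move=> a_gt0; apply: a_cut; lia.
Qed.

Lemma zeta_zperm : 0 < n -> subset_n1 K -> zeta K = oneline zperm.
Proof.
move=> n_gt0 /forallP K_gt0.
have size_oneline : size (oneline zperm) = n by rewrite size_map size_enum_ord.
rewrite -[RHS](mkseq_nth 0) size_oneline /mkseq /zeta.
have -> : iota 0 n = iota 0 (n - 0) by rewrite subn0.
have ps_n : path ltn 0 (sort leq cuts ++ [:: n]).
  rewrite cat_path /= andbT (path_sortedE ltn_trans) -andbA; apply/and3P; split.
  - by apply/allP => c; rewrite mem_sort => /imageP[p pK ->]; have := K_gt0 p; rewrite pK.
  - rewrite ltn_sorted_uniq_leq sort_uniq sort_sorted ?andbT; last exact: leq_total.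
    by rewrite map_inj_uniq ?enum_uniq //; exact: val_inj.
  - have := mem_last 0 (sort leq cuts); rewrite inE => /predU1P[->|] //.
    by rewrite mem_sort => /imageP[p _ ->]; apply: ltn_ord.
apply: zeta_blocks => //; first by rewrite last_cat.
by move=> m /andP[_ lt_mn]; rewrite mem_cat inE (ltn_eqF lt_mn) orbF mem_sort.
Qed.

End Zeta.

Lemma zperm_inj n : {in @subset_n1 n &, injective (@zperm n)}.
Proof. by move=> J K J_n1 K_n1 eq_JK; rewrite -(GDes_zperm J_n1) eq_JK GDes_zperm. Qed.

Lemma is_closedP n (u : 'S_n) : 0 < n ->
  reflect (exists2 K, subset_n1 K & u = zperm K) (is_closed u).
Proof.
move=> n_gt0; apply: (iffP existsP) => [[K /andP[K_n1 /eqP def_u]] | [K K_n1 ->]].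
  by exists K => //; apply: oneline_inj; rewrite def_u (zeta_zperm n_gt0 K_n1).
by exists K; rewrite K_n1 (zeta_zperm n_gt0 K_n1) eqxx.
Qed.

Local Open Scope ring_scope.

Lemma calME n (u v : 'S_n) : calM u v = mu u v.
Proof.
rewrite ffunE; case: (boolP (weak_le u v)) => [uv | not_uv].
  rewrite (bigD1 v) //= ffunE eqxx mulr1 big1 ?addr0 // => w /andP[_ neq_wv].
  by rewrite ffunE eq_sym (negbTE neq_wv) mulr0.
rewrite mu_out // big1 // => w uw; rewrite ffunE; case: eqP => [eq_vw|]; last by rewrite mulr0.
by rewrite eq_vw uw in not_uv.
Qed.

Lemma DD_calM n N (u : 'S_n) :
  DD N (calM u) = \sum_(K | subset_n1 K) (u == zperm K)%:R *: QM N K.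
Proof.
rewrite /DD; under eq_bigr do rewrite calME /QF scaler_sumr.
rewrite (exchange_big_dep (@subset_n1 n)) /=; last by move=> v K _ /andP[].
apply: eq_bigr => K K_n1; rewrite -scaler_suml -(sum_mu_weak_le u (zperm K)).
by congr (_ *: _); apply: eq_bigl => v; rewrite K_n1 Des_subset_zperm.
Qed.

Theorem mainTheorem13 (n : nat) (hn : (1 <= n)%N) (u : 'S_n) (N : nat) :
  DD N (calM u) = (if is_closed u then QM N (GDes u) else 0).
Proof.
rewrite DD_calM; case: (is_closedP u hn) => [[J J_n1 ->] | not_closed].
  rewrite (bigD1 J) //= eqxx scale1r GDes_zperm // big1 ?addr0 // => K /andP[K_n1 neq_KJ].
  by rewrite (inj_in_eq (@zperm_inj n)) // eq_sym (negbTE neq_KJ) scale0r.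
rewrite big1 // => K K_n1; case: eqP => [eq_uK | _]; last exact: scale0r.
by case: not_closed; exists K.
Qed.
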